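(* Let $(X,\Sigma,\mu)$ be a $\sigma$-finite measure space, $n\ge1$, $b\in\mathbb{C}^n\setminus\{0\}$, $h\in L^\infty(X,\mu;\mathbb{C})$, and define $q:L^2(X,\mu;\mathbb{C}^n)\to\mathbb{C}^n$ by $q(F)=\int_X h(x)\langle b,f_x\rangle f_x\,d\mu(x)$. Suppose $\Phi\in q^{-1}(\{0\})$ is a continuous frame. Then, with $S_\Phi=q^{-1}(\{0\})\cap\big(q^{-1}(\{0\})-\Phi\big)$, the set $\mathcal{F}^{\mathbb{C}}_{(X,\mu),n}\cap S_\Phi$ is dense in $S_\Phi$ (for the norm of $L^2(X,\mu;\mathbb{C}^n)$).
   Context: The inner product on $\mathbb{C}^n$ is $\langle u,v\rangle=\sum_k u^k\overline{v^k}$. $q^{-1}(\{0\})-\Phi=\{G-\Phi: q(G)=0\}$. A family $\Phi=(\varphi_x)_{x\in X}$ in $\mathbb{C}^n$ (with measurable coordinates) is a continuous frame indexed by $(X,\mu)$ if there are $0<A\le B$ with $A\|v\|^2\le\int_X|\langle v,\varphi_x\rangle|^2d\mu(x)\le B\|v\|^2$ for all $v\in\mathbb{C}^n$. $\mathcal{F}^{\mathbb{C}}_{(X,\mu),n}$ denotes the set of such frames, viewed as a subset of $L^2(X,\mu;\mathbb{C}^n)$ (equivalently, the elements of $L^2(X,\mu;\mathbb{C}^n)$ whose coordinate functions are linearly independent in $L^2(X,\mu;\mathbb{C})$). *)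

From mathcomp Require Import all_boot all_order all_algebra.
From mathcomp.real_closed Require Export complex.
From mathcomp Require Import all_classical all_reals all_analysis.
Set Implicit Arguments. Unset Strict Implicit. Unset Printing Implicit Defensive.
Import Order.TTheory GRing.Theory Num.Theory.
Local Open Scope ring_scope.
Local Open Scope classical_set_scope.

Section Defs.
Context {d : measure_display} {X : measurableType d} {R : realType}.
Variable mu : {measure set X -> \bar R}.
Variable n : nat.

Definition csqnorm (z : R[i]) : R := complex.Re z ^+ 2 + complex.Im z ^+ 2.

Definition cinner (u v : 'I_n -> R[i]) : R[i] := \sum_(k < n) u k * (v k)^*%C.

Definition vsqnorm (v : 'I_n -> R[i]) : R := \sum_(k < n) csqnorm (v k).

Definition cmeasurable (f : X -> R[i]) : Prop :=
  measurable_fun setT (fun x => complex.Re (f x)) /\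
  measurable_fun setT (fun x => complex.Im (f x)).

Definition cintegral (f : X -> R[i]) : R[i] :=
  Complex (Rintegral mu setT (fun x => complex.Re (f x)))
          (Rintegral mu setT (fun x => complex.Im (f x))).

Definition Linfty (h : X -> R[i]) : Prop :=
  cmeasurable h /\ exists M : R, {ae mu, forall x, csqnorm (h x) <= M}.

Definition L2 (F : X -> 'I_n -> R[i]) : Prop :=
  (forall k, cmeasurable (fun x => F x k)) /\
  (\int[mu]_x (vsqnorm (F x))%:E < +oo)%E.

Definition qmap (h : X -> R[i]) (b : 'I_n -> R[i]) (F : X -> 'I_n -> R[i])
  : 'I_n -> R[i] :=
  fun k => cintegral (fun x => h x * cinner b (F x) * F x k).

Definition cont_frame (Phi : X -> 'I_n -> R[i]) : Prop :=
  L2 Phi /\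
  exists A B : R, 0 < A /\ A <= B /\
    forall v : 'I_n -> R[i],
      ((A * vsqnorm v)%:E <= \int[mu]_x (csqnorm (cinner v (Phi x)))%:E)%E /\
      (\int[mu]_x (csqnorm (cinner v (Phi x)))%:E <= (B * vsqnorm v)%:E)%E.

Definition L2sqdist (F G : X -> 'I_n -> R[i]) : \bar R :=
  (\int[mu]_x (vsqnorm (fun k => F x k - G x k))%:E)%E.

Definition qzero (h : X -> R[i]) (b : 'I_n -> R[i]) : set (X -> 'I_n -> R[i]) :=
  [set G | L2 G /\ qmap h b G = (fun=> 0)].

Definition qzero_shift (h : X -> R[i]) (b : 'I_n -> R[i])
  (Phi : X -> 'I_n -> R[i]) : set (X -> 'I_n -> R[i]) :=
  [set H | exists2 G, qzero h b G & H = (fun x k => G x k - Phi x k)].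

Definition S_Phi h b Phi := qzero h b `&` qzero_shift h b Phi.

End Defs.

(* Let G be in S_Phi, i.e. q(G) = 0 and q(G + Phi) = 0.  On the real span of
   G and Phi the map q is a quadratic form,
     q(G + t Phi) = (1 - t) q(G) + (t^2 - t) q(Phi) + t q(G + Phi),
   so the whole real line G + t Phi lies in S_Phi.  Its squared distance to G
   is t^2 ||Phi||^2, so it suffices to find arbitrarily small t > 0 for which
   G + t Phi is a continuous frame.
   An L^2 family H is a frame as soon as its cross Gram matrix
   Gram(H, Phi)_kl = int conj(h_x^k) phi_x^l is invertible: the upper frame
   bound always holds, and by Cauchy-Schwarz v^T Gram(H, Phi), hence v, is
   controlled by int |<v, h_x>|^2.  As Phi is a frame, Gram(Phi, Phi) is
   invertible, and the pencil Gram(G + t Phi, Phi) = Gram(G, Phi) +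
   t Gram(Phi, Phi) is singular for at most n values of t. *)

From mathcomp Require Import all_boot all_order all_algebra.
From mathcomp.real_closed Require Import complex.
From mathcomp Require Import all_classical all_reals all_analysis.
From mathcomp Require Import measurable_realfun ring lra.
Set Implicit Arguments. Unset Strict Implicit. Unset Printing Implicit Defensive.
Import Order.TTheory GRing.Theory Num.Theory.
Local Open Scope ring_scope.
Local Open Scope classical_set_scope.

Local Notation cRe := complex.Re.
Local Notation cIm := complex.Im.

Section ComplexEstimates.
Context {R : realType}.
Implicit Types z w : R[i].

Lemma complex_ext z w : cRe z = cRe w -> cIm z = cIm w -> z = w.
Proof. by case: z w => [a b] [c e] /= -> ->. Qed.

Lemma ReM z w : cRe (z * w) = cRe z * cRe w - cIm z * cIm w.
Proof. by case: z w => [a b] [c e]. Qed.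

Lemma ImM z w : cIm (z * w) = cRe z * cIm w + cIm z * cRe w.
Proof. by case: z w => [a b] [c e]. Qed.

Lemma ReJ z : cRe z^*%C = cRe z. Proof. by case: z. Qed.

Lemma ImJ z : cIm z^*%C = - cIm z. Proof. by case: z. Qed.

Lemma csqnorm_ge0 z : 0 <= csqnorm z.
Proof. by rewrite /csqnorm addr_ge0 // sqr_ge0. Qed.

Lemma csqnormM z w : csqnorm (z * w) = csqnorm z * csqnorm w.
Proof. rewrite /csqnorm ReM ImM; ring. Qed.

Lemma csqnormJ z : csqnorm z^*%C = csqnorm z.
Proof. by case: z => a b; rewrite /csqnorm /= sqrrN. Qed.

Lemma Re_mulJ z : cRe (z * z^*%C) = csqnorm z.
Proof. by case: z => a b; rewrite /csqnorm /=; ring. Qed.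

Lemma csqnormD z w : csqnorm (z + w) <= 2 * (csqnorm z + csqnorm w).
Proof.
rewrite /csqnorm !raddfD /=.
have := sqr_ge0 (cRe z - cRe w); have := sqr_ge0 (cIm z - cIm w); nra.
Qed.

Lemma Re_sqr_le z : cRe z ^+ 2 <= csqnorm z.
Proof. rewrite /csqnorm; nra. Qed.

Lemma Im_sqr_le z : cIm z ^+ 2 <= csqnorm z.
Proof. rewrite /csqnorm; nra. Qed.

Lemma csqnorm_eq0 z : csqnorm z = 0 -> z = 0.
Proof.
case: z => a b; rewrite /csqnorm /= => h.
have a2 := sqr_ge0 a; have b2 := sqr_ge0 b.
have /eqP : a ^+ 2 = 0 by lra.
have /eqP : b ^+ 2 = 0 by lra.
by rewrite !sqrf_eq0 => /eqP -> /eqP ->.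
Qed.

(* The real and imaginary parts of z w are dominated by |z|^2 + |w|^2;
   this makes products of square-integrable functions integrable. *)
Lemma normr_ReM_le z w : `|cRe (z * w)| <= csqnorm z + csqnorm w.
Proof.
rewrite ReM /csqnorm ler_norml.
have := sqr_ge0 (cRe z - cRe w); have := sqr_ge0 (cRe z + cRe w).
have := sqr_ge0 (cIm z - cIm w); have := sqr_ge0 (cIm z + cIm w).
by move=> *; apply/andP; split; nra.
Qed.

Lemma normr_ImM_le z w : `|cIm (z * w)| <= csqnorm z + csqnorm w.
Proof.
rewrite ImM /csqnorm ler_norml.
have := sqr_ge0 (cRe z - cIm w); have := sqr_ge0 (cRe z + cIm w).
have := sqr_ge0 (cIm z - cRe w); have := sqr_ge0 (cIm z + cRe w).
by move=> *; apply/andP; split; nra.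
Qed.

(* A crude bound |sum_k z_k|^2 <= 2^m sum_k |z_k|^2. *)
Lemma csqnorm_sum m (F : 'I_m -> R[i]) :
  csqnorm (\sum_(k < m) F k) <= 2 ^+ m * \sum_(k < m) csqnorm (F k).
Proof.
elim: m F => [|m ih] F.
  by rewrite !big_ord0 mulr0 /csqnorm /= expr0n /= addr0.
rewrite !big_ord_recr /= exprS; apply: (le_trans (csqnormD _ _)).
have init_bound := ih (fun k => F (widen_ord (leqnSn m) k)).
have last_ge0 := csqnorm_ge0 (F ord_max).
have init_ge0 : 0 <= \sum_(k < m) csqnorm (F (widen_ord (leqnSn m) k)).
  by apply: sumr_ge0 => j _; exact: csqnorm_ge0.
have pow_ge1 : 1 <= 2 ^+ m :> R by rewrite exprn_ege1 // ler1n.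
nra.
Qed.

Lemma vsqnorm_ge0 n (v : 'I_n -> R[i]) : 0 <= vsqnorm v.
Proof. by apply: sumr_ge0 => j _; exact: csqnorm_ge0. Qed.

Lemma csqnorm_le_vsqnorm n (v : 'I_n -> R[i]) k : csqnorm (v k) <= vsqnorm v.
Proof.
rewrite /vsqnorm (bigD1 k) //= lerDl.
by apply: sumr_ge0 => j _; exact: csqnorm_ge0.
Qed.

Lemma cinner_bound n (v w : 'I_n -> R[i]) :
  csqnorm (cinner v w) <= 2 ^+ n * (vsqnorm v * vsqnorm w).
Proof.
rewrite /cinner; apply: le_trans; first exact: csqnorm_sum.
rewrite ler_pM2l ?exprn_gt0 // /vsqnorm mulr_suml; apply: ler_sum => k _.
by rewrite csqnormM csqnormJ ler_wpM2l ?csqnorm_ge0 ?csqnorm_le_vsqnorm.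
Qed.

Lemma cinner_real_comb n (v u w : 'I_n -> R[i]) (c : R) :
  cinner v (fun j => u j + c%:C%C * w j) = cinner v u + c%:C%C * cinner v w.
Proof.
rewrite /cinner mulr_sumr -big_split /=; apply: eq_bigr => j _.
(* the conjugate of c%:C computes to c -i* 0 *)
rewrite rmorphD rmorphM /= oppr0 complexr0; ring.
Qed.

Lemma cinner_addr n (v u w : 'I_n -> R[i]) :
  cinner v (fun j => u j + w j) = cinner v u + cinner v w.
Proof.
rewrite /cinner -big_split /=; apply: eq_bigr => j _; by rewrite rmorphD mulrDr.
Qed.

End ComplexEstimates.

(* Two real-variable facts behind Cauchy-Schwarz: the weighted AM-GM
   inequality, and its converse "if 2 t I <= t^2 a + b for all t > 0 then
   I^2 <= a b" (optimise in t). *)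
Section RealInequalities.
Context {R : realType}.

Lemma amgm_weighted (t r a b : R) : 0 < t -> 0 <= a -> 0 <= b ->
  r ^+ 2 <= a * b -> 2 * t * `|r| <= t ^+ 2 * a + b.
Proof.
move=> t0 a0 b0 hr.
have hs : `|r| ^+ 2 <= a * b by rewrite real_normK ?num_real.
have r_ge0 := normr_ge0 r; have gap := sqr_ge0 (t ^+ 2 * a - b).
have sum_ge0 : 0 <= t ^+ 2 * a + b by have := sqr_ge0 t; nra.
rewrite leNgt; apply/negP => hlt; nra.
Qed.

Lemma sqr_le_of_amgm (I a b : R) : 0 <= I -> 0 <= a -> 0 <= b ->
  (forall t, 0 < t -> 2 * t * I <= t ^+ 2 * a + b) -> I ^+ 2 <= a * b.
Proof.
move=> I0 a0 b0 H.
have [->|Inz] := eqVneq I 0; first by rewrite expr0n /= mulr_ge0.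
have Ip : 0 < I by rewrite lt0r Inz.
have [a_eq0|anz] := eqVneq a 0.
  have tp : 0 < (b + 1) / I by rewrite divr_gt0 //; lra.
  have := H _ tp; rewrite a_eq0 mulr0 add0r.
  have -> : 2 * ((b + 1) / I) * I = 2 * (b + 1) by field.
  lra.
have ap : 0 < a by rewrite lt0r anz.
have := H (I / a); rewrite divr_gt0 // => /(_ isT).
have -> : (I / a) ^+ 2 * a = I ^+ 2 / a by field.
have -> : 2 * (I / a) * I = 2 * (I ^+ 2 / a) by field.
by move=> h; rewrite -ler_pdivrMl // mulrC; lra.
Qed.

(* |r| <= 1 + r^2 turns a bound on |h|^2 into bounds on |Re h| and |Im h|. *)
Lemma normr_le1Dsqr (r : R) : `|r| <= 1 + r ^+ 2.
Proof. rewrite -real_normK ?num_real //; have := sqr_ge0 (`|r| - 1); nra. Qed.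

Lemma sqr_mul_lt (t e N : R) : 0 <= N -> 0 < e -> 0 <= t -> t <= e / (N + 1) ->
  t ^+ 2 * N < e ^+ 2.
Proof.
move=> N0 e0 t0; rewrite ler_pdivlMr; last by lra.
have := mulr_ge0 t0 N0; nra.
Qed.

End RealInequalities.

Section Matrices.
Context {R : realType}.

Lemma mx_bound n (B : 'M[R[i]]_n) : exists2 K : R, 0 <= K &
  forall u : 'rV[R[i]]_n,
    vsqnorm (fun l => (u *m B) 0 l) <= K * vsqnorm (fun k => u 0 k).
Proof.
exists (2 ^+ n * \sum_(l < n) vsqnorm (fun k => B k l)).
  by rewrite mulr_ge0 ?exprn_ge0 ?sumr_ge0 // => l _; exact: vsqnorm_ge0.
move=> u; rewrite {1}/vsqnorm -mulrA mulr_suml mulr_sumr; apply: ler_sum => l _.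
rewrite mxE; apply: le_trans; first exact: csqnorm_sum.
rewrite ler_pM2l ?exprn_gt0 // [vsqnorm (fun k => u 0 k)]/vsqnorm mulr_sumr.
apply: ler_sum => k _; rewrite csqnormM mulrC ler_wpM2r ?csqnorm_ge0 //.
exact: (@csqnorm_le_vsqnorm R n (fun k => B k l) k).
Qed.

(* The pencil M + t P, with P invertible, is singular for at most n values of
   t: they are roots of the characteristic polynomial of M P^-1. *)
Lemma pencil_unit n (M P : 'M[R[i]]_n) (s : seq R) : P \in unitmx ->
  uniq s -> size s = n.+1 ->
  exists2 t, t \in s & M + t%:C%C *: P \in unitmx.
Proof.
move=> Punit s_uniq s_size; apply: contrapT => none_unit.
have roots : all (root (char_poly (M *m invmx P))) [seq - t%:C%C | t <- s].
  apply/allP => _ /mapP [t ts ->]; rewrite -eigenvalue_root_char.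
  have : (M + t%:C%C *: P) \notin unitmx.
    by apply/negP => hu; apply: none_unit; exists t.
  rewrite unitmxE unitfE negbK => /det0P[r r0 hr].
  apply/eigenvalueP; exists r => //.
  move/eqP: hr; rewrite mulmxDr -scalemxAr addr_eq0 => /eqP hr.
  by rewrite mulmxA hr mulNmx -scalemxAl mulmxK // scaleNr.
have roots_uniq : uniq [seq - t%:C%C | t <- s].
  by rewrite map_inj_uniq // => a b /oppr_inj; exact: complexI.
have := max_poly_roots (monic_neq0 (char_poly_monic _)) roots roots_uniq.
by rewrite size_map size_char_poly s_size ltnn.
Qed.

Lemma pencil_unit_small n (M P : 'M[R[i]]_n) (e : R) : P \in unitmx -> 0 < e ->
  exists t : R, [/\ 0 < t, t <= e & M + t%:C%C *: P \in unitmx].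
Proof.
move=> Punit e0.
set s := [seq e / j.+1%:R | j <- iota 0 n.+1].
have s_uniq : uniq s.
  rewrite map_inj_uniq ?iota_uniq // => i j /= /(mulfI (lt0r_neq0 e0)).
  by move/invr_inj/eqP; rewrite eqr_nat => /eqP [].
have s_size : size s = n.+1 by rewrite size_map size_iota.
have [t /mapP[j _ ->] hu] := pencil_unit M Punit s_uniq s_size.
exists (e / j.+1%:R); split => //; first by rewrite divr_gt0.
by rewrite ler_pdivrMr ?ltr0n // ler_peMr ?(ltW e0) // ler1n.
Qed.

End Matrices.

Lemma fun_sum_closed (T : Type) (V : nmodType) (P : (T -> V) -> Prop) :
  P (fun=> 0) -> (forall f g, P f -> P g -> P (fun x => f x + g x)) ->
  forall m (F : 'I_m -> T -> V), (forall k, P (F k)) ->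
  P (fun x => \sum_(k < m) F k x).
Proof.
move=> P0 PD; elim=> [|m ih] F PF.
  by under eq_fun do rewrite big_ord0.
under eq_fun do rewrite big_ord_recr /=.
by apply: PD (PF _); exact: (ih (fun k => F (widen_ord (leqnSn m) k))).
Qed.

Section ComplexIntegration.
Context {d : measure_display} {X : measurableType d} {R : realType}.
Variable mu : {measure set X -> \bar R}.
Implicit Types f g : X -> R[i].
Local Notation RI g := (Rintegral mu setT g).

Definition Rintegrable (g : X -> R) := mu.-integrable setT (EFin \o g).

Definition cintegrable f := Rintegrable (fun x => cRe (f x)) /\
  Rintegrable (fun x => cIm (f x)).

Definition cL2 f :=
  cmeasurable f /\ (\int[mu]_x (csqnorm (f x))%:E < +oo)%E.

Lemma cmeasurable_cst (c : R[i]) : cmeasurable (fun _ : X => c).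
Proof. by split; exact: measurable_cst. Qed.

Lemma cmeasurableD f g : cmeasurable f -> cmeasurable g ->
  cmeasurable (fun x => f x + g x).
Proof.
move=> [f1 f2] [g1 g2]; split.
- by under eq_fun do rewrite raddfD; exact: measurable_funD.
- by under eq_fun do rewrite raddfD; exact: measurable_funD.
Qed.

Lemma cmeasurableM f g : cmeasurable f -> cmeasurable g ->
  cmeasurable (fun x => f x * g x).
Proof.
move=> [f1 f2] [g1 g2]; split.
- by under eq_fun do rewrite ReM; apply: measurable_funB; exact: measurable_funM.
- by under eq_fun do rewrite ImM; apply: measurable_funD; exact: measurable_funM.
Qed.

Lemma cmeasurableJ f : cmeasurable f -> cmeasurable (fun x => (f x)^*%C).
Proof.
move=> [f1 f2]; split.
- by under eq_fun do rewrite ReJ.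
- by under eq_fun do rewrite ImJ; exact: measurableT_comp.
Qed.

Lemma measurable_csqnorm f : cmeasurable f ->
  measurable_fun setT (fun x => csqnorm (f x)).
Proof. by move=> [f1 f2]; apply: measurable_funD; exact: measurable_funX. Qed.

Lemma Rintegrable0 : Rintegrable (fun=> 0).
Proof. exact: integrable0. Qed.

Lemma RintegrableD (g1 g2 : X -> R) : Rintegrable g1 -> Rintegrable g2 ->
  Rintegrable (fun x => g1 x + g2 x).
Proof. by move=> i1 i2; apply: eq_integrable (integrableD _ i1 i2). Qed.

Lemma RintegrableZ (r : R) (g : X -> R) : Rintegrable g ->
  Rintegrable (fun x => r * g x).
Proof. by move=> ig; apply: eq_integrable (integrableZl _ r ig). Qed.

Lemma RintegrableB (g1 g2 : X -> R) : Rintegrable g1 -> Rintegrable g2 ->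
  Rintegrable (fun x => g1 x - g2 x).
Proof. by move=> i1 i2; apply: eq_integrable (integrableB _ i1 i2). Qed.

Lemma Rintegrable_norm (g : X -> R) : Rintegrable g ->
  Rintegrable (fun x => `|g x|).
Proof. exact: integrable_norm. Qed.

Lemma Rintegrable_ge0P (g : X -> R) : measurable_fun setT g ->
  (forall x, 0 <= g x) ->
  Rintegrable g <-> (\int[mu]_x (g x)%:E < +oo)%E.
Proof.
move=> mg g0; have mEg := proj2 (measurable_EFinP setT g) mg.
have -> : (\int[mu]_x (g x)%:E = \int[mu]_x `|(g x)%:E|)%E.
  by apply: eq_integral => x _; rewrite gee0_abs // lee_fin.
by split => [/integrableP[]//|fin]; apply/integrableP.
Qed.

Lemma Rintegral_EFin (g : X -> R) : Rintegrable g ->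
  (\int[mu]_x (g x)%:E)%E = (RI g)%:E.
Proof. by move=> ig; rewrite /Rintegral fineK //; exact: integrable_fin_num. Qed.

Lemma Rintegrable_ae_le (g1 g2 : X -> R) (N : set X) : measurable N ->
  mu N = 0 -> measurable_fun setT g1 -> Rintegrable g2 ->
  (forall x, ~ N x -> `|g1 x| <= g2 x) -> Rintegrable g1.
Proof.
move=> mN N0 m1 i2 h12.
have mE1 : measurable_fun setT (EFin \o g1) by exact/measurable_EFinP.
apply/(negligible_integrable mN measurableT mE1 N0).
have i2N : mu.-integrable (setT `\` N) (EFin \o g2).
  by apply: integrableS i2 => //; exact: measurableD.
apply: le_integrable i2N.
- exact: measurableD.
- exact: measurable_funS measurableT _ mE1.
- move=> x [_ Nx] /=; rewrite lee_fin (le_trans (h12 x Nx)) //.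
  exact: ler_norm.
Qed.

Lemma Rintegrable_le (g1 g2 : X -> R) : measurable_fun setT g1 ->
  Rintegrable g2 -> (forall x, `|g1 x| <= g2 x) -> Rintegrable g1.
Proof.
move=> m1 i2 h12.
by apply: (Rintegrable_ae_le measurable0 (measure0 mu) m1 i2) => // x _.
Qed.

Lemma cintegrable0 : cintegrable (fun=> 0).
Proof. by split; exact: Rintegrable0. Qed.

Lemma cintegrableD f g : cintegrable f -> cintegrable g ->
  cintegrable (fun x => f x + g x).
Proof.
move=> [f1 f2] [g1 g2]; split.
- by under eq_fun do rewrite raddfD; exact: RintegrableD.
- by under eq_fun do rewrite raddfD; exact: RintegrableD.
Qed.

Lemma cintegrableZ (c : R[i]) f : cintegrable f ->
  cintegrable (fun x => c * f x).
Proof.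
move=> [f1 f2]; split.
- by under eq_fun do rewrite ReM; apply: RintegrableB; exact: RintegrableZ.
- by under eq_fun do rewrite ImM; apply: RintegrableD; exact: RintegrableZ.
Qed.

Lemma cintegrable_measurable f : cintegrable f -> cmeasurable f.
Proof.
by move=> [/integrableP[f1 _] /integrableP[f2 _]]; split; apply/measurable_EFinP.
Qed.

Lemma cintegral0 : cintegral mu (fun=> 0) = 0.
Proof. by apply: complex_ext; rewrite /= Rintegral_cst // mul0r. Qed.

Lemma cintegralD f g : cintegrable f -> cintegrable g ->
  cintegral mu (fun x => f x + g x) = cintegral mu f + cintegral mu g.
Proof.
move=> [f1 f2] [g1 g2]; apply: complex_ext; rewrite raddfD /=.
- by under eq_Rintegral do rewrite raddfD; rewrite RintegralD.
- by under eq_Rintegral do rewrite raddfD; rewrite RintegralD.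
Qed.

Lemma cintegralZ (c : R[i]) f : cintegrable f ->
  cintegral mu (fun x => c * f x) = c * cintegral mu f.
Proof.
move=> [f1 f2]; apply: complex_ext; rewrite ?ReM ?ImM /=.
- under eq_Rintegral do rewrite ReM.
  by rewrite RintegralB ?RintegralZl //; exact: RintegrableZ.
- under eq_Rintegral do rewrite ImM.
  by rewrite RintegralD ?RintegralZl //; exact: RintegrableZ.
Qed.

Lemma cintegral_sum m (F : 'I_m -> X -> R[i]) :
  (forall k, cintegrable (F k)) ->
  cintegral mu (fun x => \sum_(k < m) F k x) = \sum_(k < m) cintegral mu (F k).
Proof.
elim: m F => [|m ih] F hF.
  by under eq_fun do rewrite big_ord0; rewrite big_ord0 cintegral0.
under eq_fun do rewrite big_ord_recr /=.
rewrite cintegralD ?big_ord_recr /= ?ih //.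
by apply: fun_sum_closed => [|f g|k]; [exact: cintegrable0|exact: cintegrableD|].
Qed.

Lemma cL2_Rintegrable f : cL2 f -> Rintegrable (fun x => csqnorm (f x)).
Proof.
move=> [mf fin]; apply/Rintegrable_ge0P => //; first exact: measurable_csqnorm.
by move=> x; exact: csqnorm_ge0.
Qed.

Lemma Rintegrable_cL2 f : cmeasurable f ->
  Rintegrable (fun x => csqnorm (f x)) -> cL2 f.
Proof.
move=> mf ig; split => //.
exact: (Rintegrable_ge0P (measurable_csqnorm mf) (fun x => csqnorm_ge0 _)).1 ig.
Qed.

Lemma cL20 : cL2 (fun=> 0).
Proof.
apply: Rintegrable_cL2; first exact: cmeasurable_cst.
under eq_fun do rewrite /csqnorm /= expr0n /= addr0; exact: Rintegrable0.
Qed.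

Lemma cL2D f g : cL2 f -> cL2 g -> cL2 (fun x => f x + g x).
Proof.
move=> hf hg; have [mf _] := hf; have [mg _] := hg.
have mfg := cmeasurableD mf mg.
have hsum := RintegrableD (cL2_Rintegrable hf) (cL2_Rintegrable hg).
apply: Rintegrable_cL2 (Rintegrable_le (measurable_csqnorm mfg)
  (RintegrableZ 2 hsum) _) => // x.
by rewrite ger0_norm ?csqnorm_ge0 //; exact: csqnormD.
Qed.

Lemma cL2Z (c : R[i]) f : cL2 f -> cL2 (fun x => c * f x).
Proof.
move=> hf; have [mf _] := hf.
apply: Rintegrable_cL2; first exact: cmeasurableM (cmeasurable_cst _) mf.
under eq_fun do rewrite csqnormM; exact: RintegrableZ (cL2_Rintegrable hf).
Qed.

Lemma cL2J f : cL2 f -> cL2 (fun x => (f x)^*%C).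
Proof.
move=> hf; have [mf _] := hf.
apply: Rintegrable_cL2; first exact: cmeasurableJ.
under eq_fun do rewrite csqnormJ; exact: cL2_Rintegrable.
Qed.

Lemma cintegrable_mul f g : cL2 f -> cL2 g -> cintegrable (fun x => f x * g x).
Proof.
move=> hf hg; have [mf _] := hf; have [mg _] := hg.
have [m1 m2] := cmeasurableM mf mg.
have hs := RintegrableD (cL2_Rintegrable hf) (cL2_Rintegrable hg).
split.
- by apply: Rintegrable_le m1 hs _ => x; exact: normr_ReM_le.
- by apply: Rintegrable_le m2 hs _ => x; exact: normr_ImM_le.
Qed.

Lemma cintegrable_Linfty h f : Linfty mu h -> cintegrable f ->
  cintegrable (fun x => h x * f x).
Proof.
move=> [mh [M [N [mN N0 HN]]]] hf.
have [m1 m2] := cmeasurableM mh (cintegrable_measurable hf).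
have [f1 f2] := hf.
have hs : Rintegrable (fun x => (1 + M) * (`|cRe (f x)| + `|cIm (f x)|)).
  by apply: RintegrableZ; apply: RintegrableD; exact: Rintegrable_norm.
have hbound x : ~ N x -> `|cRe (h x)| <= 1 + M /\ `|cIm (h x)| <= 1 + M.
  move=> Nx; have hx : csqnorm (h x) <= M by apply: contra_notP Nx; exact: HN.
  have := Re_sqr_le (h x); have := Im_sqr_le (h x).
  have := normr_le1Dsqr (cRe (h x)); have := normr_le1Dsqr (cIm (h x)).
  by move=> *; split; lra.
split; apply: (Rintegrable_ae_le mN N0 _ hs) => // x Nx;
  have [k1 k2] := hbound x Nx; rewrite ?ReM ?ImM.
- apply: (le_trans (ler_normB _ _)); rewrite !normrM.
  have := normr_ge0 (cRe (f x)); have := normr_ge0 (cIm (f x)); nra.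
- apply: (le_trans (ler_normD _ _)); rewrite !normrM.
  have := normr_ge0 (cRe (f x)); have := normr_ge0 (cIm (f x)); nra.
Qed.

Lemma Rintegral_cauchy_schwarz (g a b : X -> R) :
  Rintegrable g -> Rintegrable a -> Rintegrable b ->
  (forall x, 0 <= a x) -> (forall x, 0 <= b x) ->
  (forall x, g x ^+ 2 <= a x * b x) -> RI g ^+ 2 <= RI a * RI b.
Proof.
move=> ig ia ib a0 b0 hab.
set I := RI (fun x => `|g x|).
have I0 : 0 <= I by apply: Rintegral_ge0 => x _.
have gI : RI g ^+ 2 <= I ^+ 2.
  rewrite -real_normK ?num_real // lerXn2r ?nnegrE //.
  exact: le_normr_Rintegral.
apply: le_trans gI _; apply: sqr_le_of_amgm => //.
- by apply: Rintegral_ge0 => x _.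
- by apply: Rintegral_ge0 => x _.
move=> t t0.
have -> : 2 * t * I = RI (fun x => 2 * t * `|g x|).
  by rewrite RintegralZl //; exact: Rintegrable_norm.
have -> : t ^+ 2 * RI a + RI b = RI (fun x => t ^+ 2 * a x + b x).
  by rewrite RintegralD ?RintegralZl //; exact: RintegrableZ.
apply: le_Rintegral => //.
- exact: RintegrableZ (Rintegrable_norm ig).
- exact: RintegrableD (RintegrableZ _ ia) ib.
- by move=> x _; exact: amgm_weighted.
Qed.

Lemma cintegral_cauchy_schwarz f g : cL2 f -> cL2 g ->
  csqnorm (cintegral mu (fun x => f x * g x)) <=
  2 * (RI (fun x => csqnorm (f x)) * RI (fun x => csqnorm (g x))).
Proof.
move=> hf hg; have [i1 i2] := cintegrable_mul hf hg.
have f0 x : 0 <= csqnorm (f x) by exact: csqnorm_ge0.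
have g0 x : 0 <= csqnorm (g x) by exact: csqnorm_ge0.
have if2 := cL2_Rintegrable hf; have ig2 := cL2_Rintegrable hg.
set Nf := RI (fun x => csqnorm (f x)); set Ng := RI (fun x => csqnorm (g x)).
have hRe : RI (fun x => cRe (f x * g x)) ^+ 2 <= Nf * Ng.
  by apply: Rintegral_cauchy_schwarz => // x; rewrite -csqnormM Re_sqr_le.
have hIm : RI (fun x => cIm (f x * g x)) ^+ 2 <= Nf * Ng.
  by apply: Rintegral_cauchy_schwarz => // x; rewrite -csqnormM Im_sqr_le.
rewrite /csqnorm /cintegral /=; lra.
Qed.

End ComplexIntegration.

Section GramFrames.
Context {d : measure_display} {X : measurableType d} {R : realType}.
Variable mu : {measure set X -> \bar R}.
Variable n : nat.
Implicit Types F G P : X -> 'I_n -> R[i].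
Local Notation RI g := (Rintegral mu setT g).

Lemma L2_Rintegrable F : L2 mu F -> Rintegrable mu (fun x => vsqnorm (F x)).
Proof.
move=> [mF fin].
have mv : measurable_fun setT (fun x => vsqnorm (F x)).
  rewrite /vsqnorm; apply: (@fun_sum_closed X R (fun g : X -> R => measurable_fun setT g)) => [|f g|k].
  - exact: measurable_cst.
  - exact: measurable_funD.
  - exact: measurable_csqnorm.
exact: (Rintegrable_ge0P mu mv (fun x => vsqnorm_ge0 _)).2 fin.
Qed.

Lemma L2_coord F k : L2 mu F -> cL2 mu (fun x => F x k).
Proof.
move=> hF; have [mF _] := hF; apply: Rintegrable_cL2 (mF k) _.
apply: Rintegrable_le (measurable_csqnorm (mF k)) (L2_Rintegrable hF) _ => x.
by rewrite ger0_norm ?csqnorm_ge0 ?csqnorm_le_vsqnorm.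
Qed.

Lemma L2_of_coord F : (forall k, cL2 mu (fun x => F x k)) -> L2 mu F.
Proof.
move=> hF; split; first by move=> k; case: (hF k).
have ig : Rintegrable mu (fun x => vsqnorm (F x)).
  rewrite /vsqnorm; apply: (@fun_sum_closed X R (Rintegrable mu)) => [|f g|k].
  - exact: Rintegrable0.
  - exact: RintegrableD.
  - exact: cL2_Rintegrable.
by rewrite Rintegral_EFin // ltry.
Qed.

Lemma L2D F G : L2 mu F -> L2 mu G -> L2 mu (fun x k => F x k + G x k).
Proof. by move=> hF hG; apply: L2_of_coord => k; apply: cL2D; exact: L2_coord. Qed.

Lemma L2Z (c : R[i]) F : L2 mu F -> L2 mu (fun x k => c * F x k).
Proof. by move=> hF; apply: L2_of_coord => k; apply: cL2Z; exact: L2_coord. Qed.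

Lemma cinner_cL2 (v : 'I_n -> R[i]) F : L2 mu F ->
  cL2 mu (fun x => cinner v (F x)).
Proof.
move=> hF; apply: (@fun_sum_closed X _ (cL2 mu)) => [|f g|k].
- exact: cL20.
- exact: cL2D.
- by apply: cL2Z; apply: cL2J; exact: L2_coord.
Qed.

Lemma cintegrable_coord F G k l : L2 mu F -> L2 mu G ->
  cintegrable mu (fun x => (F x k)^*%C * G x l).
Proof. by move=> hF hG; apply: cintegrable_mul; [apply: cL2J|]; exact: L2_coord. Qed.

Definition gram F G : 'M[R[i]]_n :=
  \matrix_(k, l) cintegral mu (fun x => (F x k)^*%C * G x l).

Lemma row_gram (v : 'I_n -> R[i]) F G l : L2 mu F -> L2 mu G ->
  ((\row_k v k) *m gram F G) 0 l = cintegral mu (fun x => cinner v (F x) * G x l).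
Proof.
move=> hF hG; rewrite mxE /cinner.
under [in RHS]eq_fun do rewrite mulr_suml.
rewrite cintegral_sum => [|k]; last first.
  by under eq_fun do rewrite -mulrA; apply: cintegrableZ; exact: cintegrable_coord.
apply: eq_bigr => k _; rewrite !mxE.
under [in RHS]eq_fun do rewrite -mulrA.
by rewrite cintegralZ //; exact: cintegrable_coord.
Qed.

Lemma gram_real_comb F P (c : R) : L2 mu F -> L2 mu P ->
  gram (fun x k => F x k + c%:C%C * P x k) P = gram F P + c%:C%C *: gram P P.
Proof.
move=> hF hP; apply/matrixP => k l; rewrite !mxE.
under eq_fun do rewrite rmorphD rmorphM /= oppr0 complexr0 mulrDl -mulrA.
rewrite cintegralD ?cintegralZ //; try exact: cintegrable_coord.
exact: cintegrableZ (cintegrable_coord _ _ hP hP).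
Qed.

Lemma frame_upper F (v : 'I_n -> R[i]) : L2 mu F ->
  (\int[mu]_x (csqnorm (cinner v (F x)))%:E <=
    ((2 ^+ n * RI (fun x => vsqnorm (F x))) * vsqnorm v)%:E)%E.
Proof.
move=> hF; have hv := cL2_Rintegrable (cinner_cL2 v hF).
have hFn := L2_Rintegrable hF.
rewrite Rintegral_EFin // lee_fin.
have -> : 2 ^+ n * RI (fun x => vsqnorm (F x)) * vsqnorm v =
    RI (fun x => 2 ^+ n * vsqnorm v * vsqnorm (F x)) by rewrite RintegralZl //; ring.
apply: le_Rintegral => //; first exact: RintegrableZ.
by move=> x _; rewrite -mulrA; exact: cinner_bound.
Qed.

(* Lower frame bound from an invertible cross Gram matrix: by Cauchy-Schwarz
   |(v^T Gram(F, P))_l|^2 <= 2 (int |<v, f_x>|^2) (int |p_x^l|^2), and v is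
   recovered from v^T Gram(F, P) by the bounded map Gram(F, P)^-1. *)
Lemma frame_lower_of_gram F P : L2 mu F -> L2 mu P -> gram F P \in unitmx ->
  exists2 A : R, 0 < A & forall v : 'I_n -> R[i],
    ((A * vsqnorm v)%:E <= \int[mu]_x (csqnorm (cinner v (F x)))%:E)%E.
Proof.
move=> hF hP hU.
have [K K0 hK] := mx_bound (invmx (gram F P)).
set SP := \sum_(l < n) RI (fun x => csqnorm (P x l)).
have SP0 : 0 <= SP.
  by apply: sumr_ge0 => l _; apply: Rintegral_ge0 => x _; exact: csqnorm_ge0.
have D0 : 0 < 2 * K * SP + 1 by have := mulr_ge0 K0 SP0; lra.
exists (2 * K * SP + 1)^-1 => [|v]; first by rewrite invr_gt0.
have hv := cinner_cL2 v hF.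
rewrite Rintegral_EFin ?(cL2_Rintegrable hv) // lee_fin.
set Q := RI _.
have Q0 : 0 <= Q by apply: Rintegral_ge0 => x _; exact: csqnorm_ge0.
set u := (\row_k v k) *m gram F P.
have hu : vsqnorm (fun l => u 0 l) <= 2 * Q * SP.
  rewrite /vsqnorm /SP mulr_sumr; apply: ler_sum => l _.
  rewrite row_gram // -mulrA.
  exact: cintegral_cauchy_schwarz hv (L2_coord l hP).
have hvu : vsqnorm v <= K * (2 * Q * SP).
  have -> : vsqnorm v = vsqnorm (fun l => (u *m invmx (gram F P)) 0 l).
    by rewrite /u mulmxK //; congr vsqnorm; apply: funext => k; rewrite mxE.
  by apply: le_trans (hK u) _; rewrite ler_wpM2l.
rewrite mulrC ler_pdivrMr //.
apply: le_trans hvu _; rewrite mulrDr mulr1.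
have -> : K * (2 * Q * SP) = Q * (2 * K * SP) by ring.
by rewrite lerDl.
Qed.

Lemma cont_frame_of_gram F P : L2 mu F -> L2 mu P -> gram F P \in unitmx ->
  cont_frame mu F.
Proof.
move=> hF hP hU; have [A A0 hA] := frame_lower_of_gram hF hP hU.
set B := 2 ^+ n * RI (fun x => vsqnorm (F x)).
have B0 : 0 <= B.
  by rewrite mulr_ge0 ?exprn_ge0 //; apply: Rintegral_ge0 => x _; exact: vsqnorm_ge0.
split=> //; exists A, (B + A); split=> //; split=> [|v]; first lra.
split; first exact: hA.
apply: le_trans (frame_upper v hF) _.
by rewrite lee_fin ler_wpM2r ?vsqnorm_ge0 // lerDl ltW.
Qed.

Lemma Rintegral_sqr_cinner (v : 'I_n -> R[i]) P : L2 mu P ->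
  RI (fun x => csqnorm (cinner v (P x))) =
  cRe (\sum_(l < n) (v l)^*%C * ((\row_k v k) *m gram P P) 0 l).
Proof.
move=> hP; have hv := cinner_cL2 v hP.
have expand x : cinner v (P x) * (cinner v (P x))^*%C =
    \sum_(l < n) (v l)^*%C * (cinner v (P x) * P x l).
  set w := cinner v (P x).
  have -> : w^*%C = \sum_(l < n) (v l)^*%C * P x l.
    by rewrite /w /cinner rmorph_sum; apply: eq_bigr => l _; rewrite rmorphM /= conjcK.
  by rewrite mulr_sumr; apply: eq_bigr => l _; ring.
have -> : \sum_(l < n) (v l)^*%C * ((\row_k v k) *m gram P P) 0 l =
    cintegral mu (fun x => cinner v (P x) * (cinner v (P x))^*%C).
  under [in RHS]eq_fun do rewrite expand.
  rewrite cintegral_sum => [|l]; last first.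
    by apply: cintegrableZ; exact: cintegrable_mul hv (L2_coord l hP).
  apply: eq_bigr => l _.
  by rewrite row_gram // cintegralZ //; exact: cintegrable_mul hv (L2_coord l hP).
by rewrite /cintegral /=; apply: eq_Rintegral => x _; rewrite Re_mulJ.
Qed.

(* The Gram matrix of a frame with itself is invertible: v^T Gram(P, P) = 0
   forces int |<v, p_x>|^2 = 0, hence v = 0 by the lower frame bound. *)
Lemma gram_unit_of_frame P : cont_frame mu P -> gram P P \in unitmx.
Proof.
move=> [hP [A [B [A0 [_ hA]]]]].
rewrite unitmxE unitfE; apply/negP => /det0P[r r0 hr].
pose v k := r 0 k.
have rv : r = \row_k v k by apply/rowP => k; rewrite mxE.
have Q0 : RI (fun x => csqnorm (cinner v (P x))) = 0.
  by rewrite Rintegral_sqr_cinner // -rv hr big1 // => l _; rewrite mxE mulr0.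
have := (hA v).1; rewrite Rintegral_EFin; last exact: cL2_Rintegrable (cinner_cL2 v hP).
rewrite Q0 lee_fin pmulr_rle0 // => v_le0.
move/negP: r0; apply; apply/eqP/rowP => k; rewrite mxE; apply: csqnorm_eq0.
apply/eqP; rewrite eq_le csqnorm_ge0 andbT.
exact: le_trans (csqnorm_le_vsqnorm v k) v_le0.
Qed.

End GramFrames.

Section QuadraticMap.
Context {d : measure_display} {X : measurableType d} {R : realType}.
Variable mu : {measure set X -> \bar R}.
Variable n : nat.
Implicit Types F G P : X -> 'I_n -> R[i].
Local Notation RI g := (Rintegral mu setT g).

Lemma qmap_integrable (h : X -> R[i]) (b : 'I_n -> R[i]) F k :
  Linfty mu h -> L2 mu F ->
  cintegrable mu (fun x => h x * cinner b (F x) * F x k).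
Proof.
move=> hh hF; under eq_fun do rewrite -mulrA.
exact: cintegrable_Linfty hh (cintegrable_mul (cinner_cL2 b hF) (L2_coord k hF)).
Qed.

Lemma qmap_real_comb (h : X -> R[i]) (b : 'I_n -> R[i]) F P (c : R) :
  Linfty mu h -> L2 mu F -> L2 mu P ->
  qmap mu h b (fun x k => F x k + c%:C%C * P x k) =
  fun k => (1 - c%:C%C) * qmap mu h b F k + (c%:C%C ^+ 2 - c%:C%C) * qmap mu h b P k
    + c%:C%C * qmap mu h b (fun x k => F x k + P x k) k.
Proof.
move=> hh hF hP; apply: funext => k; rewrite /qmap.
set C := c%:C%C.
have hFP := L2D hF hP.
have pointwise x :
    h x * cinner b (fun k => F x k + C * P x k) * (F x k + C * P x k) =
    (1 - C) * (h x * cinner b (F x) * F x k)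
    + (C ^+ 2 - C) * (h x * cinner b (P x) * P x k)
    + C * (h x * cinner b (fun k => F x k + P x k) * (F x k + P x k)).
  by rewrite cinner_real_comb cinner_addr; ring.
have iF := qmap_integrable b k hh hF.
have iP := qmap_integrable b k hh hP.
have iFP := qmap_integrable b k hh hFP.
under eq_fun do rewrite pointwise.
rewrite (cintegralD (cintegrableD (cintegrableZ _ iF) (cintegrableZ _ iP))
  (cintegrableZ _ iFP)).
by rewrite (cintegralD (cintegrableZ _ iF) (cintegrableZ _ iP)) !cintegralZ.
Qed.

Lemma qzero_line (h : X -> R[i]) (b : 'I_n -> R[i]) F P (c : R) :
  Linfty mu h -> qzero mu h b F -> qzero mu h b P ->
  qzero mu h b (fun x k => F x k + P x k) ->
  qzero mu h b (fun x k => F x k + c%:C%C * P x k).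
Proof.
move=> hh [hF qF] [hP qP] [_ qFP]; split; first exact: L2D hF (L2Z _ hP).
rewrite qmap_real_comb // qF qP qFP; apply: funext => k; by rewrite !mulr0 !addr0.
Qed.

Lemma S_Phi_line (h : X -> R[i]) (b : 'I_n -> R[i]) Phi G (t : R) :
  Linfty mu h -> qzero mu h b Phi -> S_Phi mu h b Phi G ->
  S_Phi mu h b Phi (fun x k => G x k + t%:C%C * Phi x k).
Proof.
move=> hh qPhi [qG [G1 qG1 eG]].
have qGPhi : qzero mu h b (fun x k => G x k + Phi x k).
  suff -> : (fun x k => G x k + Phi x k) = G1 by [].
  by rewrite eG; apply: funext => x; apply: funext => k; rewrite subrK.
split; first exact: qzero_line.
exists (fun x k => G x k + (1 + t)%:C%C * Phi x k); first exact: qzero_line.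
by apply: funext => x; apply: funext => k; rewrite rmorphD rmorph1; ring.
Qed.

Lemma L2sqdist_line G P (t : R) : L2 mu P ->
  L2sqdist mu G (fun x k => G x k + t%:C%C * P x k) =
  (t ^+ 2 * RI (fun x => vsqnorm (P x)))%:E.
Proof.
move=> hP; have hPn := L2_Rintegrable hP.
have pointwise x :
    vsqnorm (fun k => G x k - (G x k + t%:C%C * P x k)) = t ^+ 2 * vsqnorm (P x).
  rewrite /vsqnorm mulr_sumr; apply: eq_bigr => k _.
  rewrite opprD addrA subrr add0r -mulNr csqnormM /csqnorm /=; ring.
rewrite /L2sqdist; under eq_integral do rewrite pointwise.
by rewrite Rintegral_EFin ?RintegralZl //; exact: RintegrableZ.
Qed.

End QuadraticMap.

Theorem corollary6p6 (d : measure_display) (X : measurableType d) (R : realType)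
  (mu : {measure set X -> \bar R}) (n : nat)
  (b : 'I_n -> R[i]) (h : X -> R[i]) (Phi : X -> 'I_n -> R[i]) :
  sigma_finite setT mu ->
  (0 < n)%N ->
  b <> (fun=> 0) ->
  Linfty mu h ->
  qzero mu h b Phi ->
  cont_frame mu Phi ->
  forall G, S_Phi mu h b Phi G ->
  forall eps : R, 0 < eps ->
  exists H, cont_frame mu H /\ S_Phi mu h b Phi H /\
    (L2sqdist mu G H < (eps ^+ 2)%:E)%E.
Proof.
move=> _ _ _ hh qPhi frame G SG eps eps0.
have [hPhi _] := frame; have [[hG _] _] := SG.
set N := Rintegral mu setT (fun x => vsqnorm (Phi x)).
have N0 : 0 <= N by apply: Rintegral_ge0 => x _; exact: vsqnorm_ge0.
have e0 : 0 < eps / (N + 1) by rewrite divr_gt0 //; lra.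
(* a small t > 0 making Gram(G + t Phi, Phi) = Gram(G, Phi) + t Gram(Phi, Phi) invertible *)
have [t [t0 te hu]] := pencil_unit_small (gram mu G Phi) (gram_unit_of_frame frame) e0.
exists (fun x k => G x k + t%:C%C * Phi x k); split; [|split].
- apply: (cont_frame_of_gram (L2D hG (L2Z _ hPhi)) hPhi).
  by rewrite gram_real_comb.
- exact: S_Phi_line.
- by rewrite L2sqdist_line // lte_fin; exact: sqr_mul_lt (ltW t0) te.
Qed.
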